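(* Let $n\ge3$ and let $\mathbf M_n$ be the lattice with elements $0,a_1,\dots,a_n,1$, where $0<a_i<1$ for all $i$ and the $a_i$ are pairwise incomparable. Let $\pi$ be a permutation of $\{a_1,\dots,a_n\}$ with $\pi(a_i)\ne a_i$ for all $i$, and define $0':=1$, $1':=0$, $a_i':=\pi(a_i)$. Then $(M_n,\vee,\wedge,{}',0,1)$ is a finite subdirectly irreducible member of $\mathcal V$. Consequently $\mathcal V$ has infinitely many pairwise non-isomorphic finite subdirectly irreducible members.
   Context: $\mathcal V$ is the variety of algebras $(L,\vee,\wedge,{}',0,1)$ that are bounded lattices with a complementation $'$ (i.e. $x\vee x'\approx1$, $x\wedge x'\approx0$) satisfying the identities $x\vee y'\approx y'\vee\big((x\vee y')\wedge y\big)$ and $x\wedge y\approx x\wedge\big((x\wedge y)\vee x'\big)$. *)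

From Stdlib Require List.
From mathcomp Require Import all_boot all_fingroup.
Set Implicit Arguments. Unset Strict Implicit. Unset Printing Implicit Defensive.

Record ocl_alg := OclAlg {
  carrier :> Type;
  ajoin : carrier -> carrier -> carrier;
  ameet : carrier -> carrier -> carrier;
  acompl : carrier -> carrier;
  azero : carrier;
  aone : carrier }.

Definition in_V (A : ocl_alg) : Prop :=
  let j := @ajoin A in let m := @ameet A in let c := @acompl A in
  let o := @azero A in let t := @aone A in
  (forall x y z, j x (j y z) = j (j x y) z) /\
  (forall x y z, m x (m y z) = m (m x y) z) /\
  (forall x y, j x y = j y x) /\
  (forall x y, m x y = m y x) /\
  (forall x y, j x (m x y) = x) /\
  (forall x y, m x (j x y) = x) /\
  (forall x, j x o = x) /\
  (forall x, m x t = x) /\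
  (forall x, j x (c x) = t) /\
  (forall x, m x (c x) = o) /\
  (forall x y, j x (c y) = j (c y) (m (j x (c y)) y)) /\
  (forall x y, m x y = m x (j (m x y) (c x))).

Definition finite_alg (A : ocl_alg) : Prop :=
  exists s : list A, forall x : A, List.In x s.

Definition is_congruence (A : ocl_alg) (R : A -> A -> Prop) : Prop :=
  (forall x, R x x) /\ (forall x y, R x y -> R y x) /\
  (forall x y z, R x y -> R y z -> R x z) /\
  (forall x1 x2 y1 y2, R x1 x2 -> R y1 y2 -> R (@ajoin A x1 y1) (@ajoin A x2 y2)) /\
  (forall x1 x2 y1 y2, R x1 x2 -> R y1 y2 -> R (@ameet A x1 y1) (@ameet A x2 y2)) /\
  (forall x1 x2, R x1 x2 -> R (@acompl A x1) (@acompl A x2)).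

Definition nontrivial_rel (A : ocl_alg) (R : A -> A -> Prop) : Prop :=
  exists x y, R x y /\ x <> y.

Definition subdirectly_irreducible (A : ocl_alg) : Prop :=
  (exists x y : A, x <> y) /\
  exists mu : A -> A -> Prop,
    is_congruence mu /\ nontrivial_rel mu /\
    forall th : A -> A -> Prop, is_congruence th -> nontrivial_rel th ->
      forall x y, mu x y -> th x y.

Definition isomorphic (A B : ocl_alg) : Prop :=
  exists (f : A -> B) (g : B -> A),
    cancel f g /\ cancel g f /\
    (forall x y, f (@ajoin A x y) = @ajoin B (f x) (f y)) /\
    (forall x y, f (@ameet A x y) = @ameet B (f x) (f y)) /\
    (forall x, f (@acompl A x) = @acompl B (f x)) /\
    f (@azero A) = @azero B /\ f (@aone A) = @aone B.

(* The lattice M_n: None = 0, Some None = 1, Some (Some i) = a_i. *)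
Definition Mn_car (n : nat) := option (option 'I_n).

Definition Mn_join n (x y : Mn_car n) : Mn_car n :=
  if x == None then y else if y == None then x
  else if x == y then x else Some None.

Definition Mn_meet n (x y : Mn_car n) : Mn_car n :=
  if x == Some None then y else if y == Some None then x
  else if x == y then x else None.

Definition Mn_compl n (p : {perm 'I_n}) (x : Mn_car n) : Mn_car n :=
  match x with
  | None => Some None
  | Some None => None
  | Some (Some i) => Some (Some (p i))
  end.

Definition Mn_alg n (p : {perm 'I_n}) : ocl_alg :=
  @OclAlg (Mn_car n) (@Mn_join n) (@Mn_meet n) (Mn_compl p) None (Some None).

From mathcomp Require Import all_boot all_fingroup.
Set Implicit Arguments. Unset Strict Implicit. Unset Printing Implicit Defensive.

(* In a modular lattice with a complementation the two identities defining V
   are instances of the modular law: since y' <= x v y', the modular law gives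
   y' v ((x v y') ^ y) = (x v y') ^ (y' v y) = x v y', and since x ^ y <= x it
   gives (x ^ y) v (x' ^ x) = x ^ ((x ^ y) v x').  M_n is modular, and a
   fixed-point-free pi makes x |-> x' a complementation.  For n >= 3, M_n is
   simple: a congruence collapsing two distinct elements collapses 0 with an
   atom or an atom with 1, and joining and meeting with two further atoms then
   collapses 0 with 1.  Cyclic shifts of the atoms give such algebras of every
   size n + 2 >= 5. *)

Section ModularComplemented.

Variable A : ocl_alg.
Local Notation j := (@ajoin A).
Local Notation m := (@ameet A).
Local Notation c := (@acompl A).
Local Notation o := (@azero A).
Local Notation t := (@aone A).

Hypothesis joinA : forall x y z, j x (j y z) = j (j x y) z.
Hypothesis meetA : forall x y z, m x (m y z) = m (m x y) z.
Hypothesis joinC : forall x y, j x y = j y x.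
Hypothesis meetC : forall x y, m x y = m y x.
Hypothesis joinKI : forall x y, j x (m x y) = x.
Hypothesis meetKU : forall x y, m x (j x y) = x.
Hypothesis join0 : forall x, j x o = x.
Hypothesis meet1 : forall x, m x t = x.
Hypothesis joinxC : forall x, j x (c x) = t.
Hypothesis meetxC : forall x, m x (c x) = o.
Hypothesis modular : forall x y z, j x z = z -> j x (m y z) = m (j x y) z.

Lemma joinxx x : j x x = x.
Proof. by rewrite -{2}(meetKU x x) joinKI. Qed.

Lemma join_compl_meet x y : j x (c y) = j (c y) (m (j x (c y)) y).
Proof.
have le_cy : j (c y) (j x (c y)) = j x (c y) by rewrite joinC -joinA joinxx.
by rewrite meetC modular // [j (c y) y]joinC joinxC meetC meet1.
Qed.

Lemma meet_join_compl x y : m x y = m x (j (m x y) (c x)).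
Proof.
have le_xy : j (m x y) x = x by rewrite joinC joinKI.
by rewrite [RHS]meetC -modular // [m (c x) x]meetC meetxC join0.
Qed.

Lemma modular_complemented_in_V : in_V A.
Proof.
by do !split; [exact: joinA|exact: meetA|exact: joinC|exact: meetC|exact: joinKI
  |exact: meetKU|exact: join0|exact: meet1|exact: joinxC|exact: meetxC
  |exact: join_compl_meet|exact: meet_join_compl].
Qed.

End ModularComplemented.

Lemma simple_subdirectly_irreducible (A : ocl_alg) :
  (exists x y : A, x <> y) ->
  (forall th, is_congruence th -> nontrivial_rel th -> forall x y : A, th x y) ->
  subdirectly_irreducible A.
Proof.
move=> [x [y xy]] simple; split; first by exists x, y.
exists (fun _ _ => True); split; first by do !split.
split; first by exists x, y.
by move=> th th_cong th_nt u v _; exact: simple.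
Qed.

Lemma exists_avoid2 (T : finType) (i k : T) : 2 < #|T| -> exists l, i != l /\ k != l.
Proof.
move=> T_gt2.
have : ~~ ([set: T] \subset [set i; k]).
  apply: contraTN T_gt2 => /subset_leq_card; rewrite cardsT cards2 -leqNgt.
  by move/leq_trans; apply; case: (i != k).
case/subsetPn => l _; rewrite !inE negb_or => /andP[li lk].
by exists l; rewrite !(eq_sym _ l).
Qed.

Lemma mem_In (T : eqType) (x : T) (s : seq T) : x \in s -> List.In x s.
Proof. by elim: s => //= y s IH; rewrite in_cons => /orP[/eqP->|/IH]; [left|right]. Qed.

Lemma Mn_atom_eq n (i k : 'I_n) :
  (Some (Some i) == Some (Some k) :> Mn_car n) = (i == k).
Proof. by []. Qed.

Ltac Mn_eval :=
  rewrite /Mn_join /Mn_meet /= ?Mn_atom_eq;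
  repeat match goal with
  | |- context [?i == ?k] =>
      match type of i with ordinal _ =>
        case: (eqVneq i k) => [?|?]; try subst; rewrite /= ?Mn_atom_eq ?eqxx end
  end;
  try match goal with H : is_true (?i != ?i) |- _ => by rewrite eqxx in H end.

Section Mn.

Variables (n : nat) (p : {perm 'I_n}).
Local Notation M := (Mn_car n).
Local Notation join := (@Mn_join n).
Local Notation meet := (@Mn_meet n).
Local Notation compl := (Mn_compl p).
Local Notation a i := (Some (Some i) : M).

Lemma Mn_joinA (x y z : M) : join x (join y z) = join (join x y) z.
Proof. by case: x y z => [[?|]|] [[?|]|] [[?|]|]; Mn_eval. Qed.

Lemma Mn_meetA (x y z : M) : meet x (meet y z) = meet (meet x y) z.
Proof. by case: x y z => [[?|]|] [[?|]|] [[?|]|]; Mn_eval. Qed.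

Lemma Mn_joinC (x y : M) : join x y = join y x.
Proof. by case: x y => [[?|]|] [[?|]|]; Mn_eval. Qed.

Lemma Mn_meetC (x y : M) : meet x y = meet y x.
Proof. by case: x y => [[?|]|] [[?|]|]; Mn_eval. Qed.

Lemma Mn_joinKI (x y : M) : join x (meet x y) = x.
Proof. by case: x y => [[?|]|] [[?|]|]; Mn_eval. Qed.

Lemma Mn_meetKU (x y : M) : meet x (join x y) = x.
Proof. by case: x y => [[?|]|] [[?|]|]; Mn_eval. Qed.

Lemma Mn_meetxx (x : M) : meet x x = x.
Proof. by case: x => [[?|]|]; Mn_eval. Qed.

Lemma Mn_join0 (x : M) : join x None = x.
Proof. by case: x => [[?|]|]. Qed.

Lemma Mn_join1 (x : M) : join x (Some None) = Some None.
Proof. by case: x => [[?|]|]. Qed.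

Lemma Mn_meet1 (x : M) : meet x (Some None) = x.
Proof. by case: x => [[?|]|]. Qed.

Lemma Mn_modular (x y z : M) :
  join x z = z -> join x (meet y z) = meet (join x y) z.
Proof. by case: x y z => [[?|]|] [[?|]|] [[?|]|]; Mn_eval. Qed.

Section FixedPointFree.

Hypothesis p_fpf : forall i, p i != i.

Lemma Mn_joinxC (x : M) : join x (compl x) = Some None.
Proof. by case: x => [[i|]|] //; rewrite /Mn_join /= Mn_atom_eq eq_sym (negbTE (p_fpf i)). Qed.

Lemma Mn_meetxC (x : M) : meet x (compl x) = None.
Proof. by case: x => [[i|]|] //; rewrite /Mn_meet /= Mn_atom_eq eq_sym (negbTE (p_fpf i)). Qed.

Lemma Mn_alg_in_V : in_V (Mn_alg p).
Proof.
apply: modular_complemented_in_V.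
- exact: Mn_joinA.
- exact: Mn_meetA.
- exact: Mn_joinC.
- exact: Mn_meetC.
- exact: Mn_joinKI.
- exact: Mn_meetKU.
- exact: Mn_join0.
- exact: Mn_meet1.
- exact: Mn_joinxC.
- exact: Mn_meetxC.
- exact: Mn_modular.
Qed.

End FixedPointFree.
End Mn.

Section MnSimple.

Variable n : nat.
Local Notation M := (Mn_car n).
Local Notation join := (@Mn_join n).
Local Notation meet := (@Mn_meet n).
Local Notation a i := (Some (Some i) : M).

Lemma Mn_join_atoms (i k : 'I_n) : i != k -> join (a i) (a k) = Some None.
Proof. by move=> ik; rewrite /Mn_join /= Mn_atom_eq (negbTE ik). Qed.

Lemma Mn_meet_atoms (i k : 'I_n) : i != k -> meet (a i) (a k) = None.
Proof. by move=> ik; rewrite /Mn_meet /= Mn_atom_eq (negbTE ik). Qed.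

Hypothesis n_gt2 : 2 < n.

Variable th : M -> M -> Prop.
Hypothesis th_refl : forall x, th x x.
Hypothesis th_sym : forall x y, th x y -> th y x.
Hypothesis th_trans : forall x y z, th x y -> th y z -> th x z.
Hypothesis th_join :
  forall x1 x2 y1 y2, th x1 x2 -> th y1 y2 -> th (join x1 y1) (join x2 y2).
Hypothesis th_meet :
  forall x1 x2 y1 y2, th x1 x2 -> th y1 y2 -> th (meet x1 y1) (meet x2 y2).

Let avoid2 (i k : 'I_n) : exists l, i != l /\ k != l.
Proof. by apply: exists_avoid2; rewrite card_ord. Qed.

Lemma Mn_cong_zero_atom i : th None (a i) -> th None (Some None).
Proof.
move=> th0i; have [k [ik _]] := avoid2 i i; have [l [il kl]] := avoid2 i k.
have thl1 : th (a l) (Some None).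
  by have := th_join th0i (th_refl (a l)); rewrite Mn_join_atoms.
have th0k : th None (a k).
  by have := th_meet thl1 (th_refl (a k)); rewrite Mn_meet_atoms // eq_sym.
have thk1 : th (a k) (Some None).
  by have := th_join th0i (th_refl (a k)); rewrite Mn_join_atoms.
exact: th_trans th0k thk1.
Qed.

Lemma Mn_cong_zero_one x y : x <> y -> th x y -> th None (Some None).
Proof.
have atom_one i : th (a i) (Some None) -> th None (Some None).
  move=> thi1; have [l [il _]] := avoid2 i i.
  apply: (@Mn_cong_zero_atom l).
  by have := th_meet thi1 (th_refl (a l)); rewrite Mn_meet_atoms.
move: x y => [[i|]|] [[k|]|] xy thxy //.
- have ki : k != i by apply/eqP => ki; apply: xy; rewrite ki.
  apply: (@Mn_cong_zero_atom i); apply: th_sym.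
  by have := th_meet thxy (th_refl (a i)); rewrite Mn_meetxx (Mn_meet_atoms ki).
- exact: atom_one thxy.
- exact: (@Mn_cong_zero_atom i) (th_sym thxy).
- exact: atom_one k (th_sym thxy).
- exact: th_sym.
- exact: (@Mn_cong_zero_atom k).
Qed.

Lemma Mn_cong_total : th None (Some None) -> forall x y, th x y.
Proof.
move=> th01 x y.
have th_one z : th z (Some None).
  by have := th_join (th_refl z) th01; rewrite Mn_join0 Mn_join1.
exact: th_trans (th_one x) (th_sym (th_one y)).
Qed.

End MnSimple.

Lemma Mn_simple n (p : {perm 'I_n}) : 2 < n ->
  forall th : Mn_alg p -> Mn_alg p -> Prop,
  is_congruence th -> nontrivial_rel th -> forall x y, th x y.
Proof.
move=> n_gt2 th [th_refl [th_sym [th_trans [th_join [th_meet _]]]]] [x [y [thxy xy]]].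
apply: (Mn_cong_total th_refl th_sym th_trans th_join).
exact: (Mn_cong_zero_one n_gt2 th_refl th_sym th_trans th_join th_meet xy thxy).
Qed.

Lemma Mn_alg_subdirectly_irreducible n (p : {perm 'I_n}) :
  2 < n -> subdirectly_irreducible (Mn_alg p).
Proof.
move=> n_gt2; apply: simple_subdirectly_irreducible; first by exists None, (Some None).
exact: Mn_simple.
Qed.

Lemma Mn_alg_finite n (p : {perm 'I_n}) : finite_alg (Mn_alg p).
Proof. by exists (enum {: option (option 'I_n)}) => x; apply: mem_In; rewrite mem_enum. Qed.

Lemma isomorphic_Mn_card n m (p : {perm 'I_n}) (q : {perm 'I_m}) :
  isomorphic (Mn_alg p) (Mn_alg q) -> n = m.
Proof.
move=> [f [g [fK [gK _]]]].
have := @bij_eq_card (option (option 'I_n)) (option (option 'I_m)) f (Bijective fK gK).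
by rewrite !card_option !card_ord => -[].
Qed.

Lemma ordS_neq n (i : 'I_n) : 1 < n -> ordS i != i.
Proof.
move=> n_gt1; apply/eqP => /(congr1 val) /=.
have := ltn_ord i; rewrite leq_eqVlt => /predU1P[iSn|iSn].
  by rewrite iSn modnn => i0; move: n_gt1; rewrite -iSn -i0.
by rewrite modn_small // => /eqP; rewrite (gtn_eqF (ltnSn _)).
Qed.

Definition ordS_perm n : {perm 'I_n} := perm (@ordS_inj n).

Theorem mainTheorem10 :
  (forall (n : nat) (p : {perm 'I_n}),
      3 <= n -> (forall i : 'I_n, p i != i) ->
      finite_alg (Mn_alg p) /\ in_V (Mn_alg p) /\
      subdirectly_irreducible (Mn_alg p)) /\
  (exists F : nat -> ocl_alg,
      (forall k, finite_alg (F k) /\ in_V (F k) /\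
                 subdirectly_irreducible (F k)) /\
      (forall k l, k <> l -> ~ isomorphic (F k) (F l))).
Proof.
have Mn_member n (p : {perm 'I_n}) : 3 <= n -> (forall i, p i != i) ->
    finite_alg (Mn_alg p) /\ in_V (Mn_alg p) /\ subdirectly_irreducible (Mn_alg p).
  move=> n_gt2 p_fpf; split; first exact: Mn_alg_finite.
  by split; [exact: Mn_alg_in_V | exact: Mn_alg_subdirectly_irreducible].
split=> //.
exists (fun k => Mn_alg (ordS_perm k.+3)); split.
  by move=> k; apply: Mn_member => // i; rewrite permE ordS_neq.
by move=> k l kl /isomorphic_Mn_card [].
Qed.
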